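(* Assume: (A1) $f(x,y)$ and each component of $g(x,y)$ are convex in $y$ for each fixed $x$, and $f,g$ are twice continuously differentiable; (A2) $Y\subseteq\mathbb{R}^m$ is a compact convex set with $\{y:\exists x\in X \text{ such that } g(x,y)\le 0\}\subseteq\mathrm{int}(Y)$; (R1) for each $x\in X$ there exists $y$ with $g(x,y)<0$. Let $\epsilon\ge0$ and $x\in X$. Then $y$ is an $\epsilon$-solution of the lower level problem at $x$ if and only if there exists $\lambda$ such that $(x,y,\lambda)\in\mathcal{C}(\epsilon,0)$. Moreover, if $\mu\ge0$ and $y$ is an $\epsilon$-solution of the lower level problem at $x$, then there exists $\lambda$ such that $(x,y,\lambda)\in\mathcal{C}(\epsilon,\mu)$.
   Context: Let $f:\mathbb{R}^n\times\mathbb{R}^m\to\mathbb{R}$, $g:\mathbb{R}^n\times\mathbb{R}^m\to\mathbb{R}^p$, $G:\mathbb{R}^n\to\mathbb{R}^q$; vector inequalities componentwise; $X=\{x:G(x)\le0\}$. The lower level problem at $x$ is $\min_y\{f(x,y):g(x,y)\le0\}$; $y$ is an $\epsilon$-solution of it if $f(x,y)\le\min_{y'}\{f(x,y'):g(x,y')\le0\}+\epsilon$ and $g(x,y)\le\epsilon$ (componentwise). For $\mu\ge0$, $h_\mu(\lambda,x)=\min_y\{\mu\|y\|^2+f(x,y)+\lambda^{\mathsf T}g(x,y):y\in Y\}$ with $Y$ from (A2), and $\mathcal{C}(\epsilon,\mu)=\{(x,y,\lambda): G(x)\le0,\ g(x,y)\le\epsilon,\ \lambda\ge0,\ f(x,y)-h_\mu(\lambda,x)\le\epsilon\}$.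 *)

From HB Require Import structures.
From mathcomp Require Import all_boot all_order all_algebra.
From mathcomp Require Import all_classical all_reals all_analysis.
Set Implicit Arguments. Unset Strict Implicit. Unset Printing Implicit Defensive.
Import Order.TTheory GRing.Theory Num.Theory.
Import numFieldNormedType.Exports.
Local Open Scope classical_set_scope.
Local Open Scope ring_scope.

Section Defs.
Variable R : realType.

Definition vle_c (k : nat) (u : 'rV[R]_k) (c : R) : Prop := forall i, u 0 i <= c.
Definition vlt_c (k : nat) (u : 'rV[R]_k) (c : R) : Prop := forall i, u 0 i < c.
Definition vge0 (k : nat) (u : 'rV[R]_k) : Prop := forall i, 0 <= u 0 i.

Definition sqnorm (k : nat) (y : 'rV[R]_k) : R := \sum_(i < k) (y 0 i) ^+ 2.
Definition dotv (k : nat) (u v : 'rV[R]_k) : R := \sum_(i < k) u 0 i * v 0 i.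

Definition ebasis (N : nat) (i : 'I_N) : 'rV[R]_N := delta_mx 0 i.

Definition C2 (N : nat) (F : 'rV[R]_N -> R) : Prop :=
  forall i j : 'I_N,
    (forall z, derivable F z (ebasis i)) /\
    continuous ('D_(ebasis i) F) /\
    (forall z, derivable ('D_(ebasis i) F) z (ebasis j)) /\
    continuous ('D_(ebasis j) ('D_(ebasis i) F)).

Definition joint (n m : nat) (F : 'rV[R]_n -> 'rV[R]_m -> R) : 'rV[R]_(n + m) -> R :=
  fun z => F (lsubmx z) (rsubmx z).

Definition convex_fun_rV (m : nat) (F : 'rV[R]_m -> R) : Prop :=
  forall (y1 y2 : 'rV[R]_m) (t : R), 0 <= t -> t <= 1 ->
    F (t *: y1 + (1 - t) *: y2) <= t * F y1 + (1 - t) * F y2.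

Definition convex_set_rV (m : nat) (Y : set 'rV[R]_m) : Prop :=
  forall (y1 y2 : 'rV[R]_m) (t : R), Y y1 -> Y y2 -> 0 <= t -> t <= 1 ->
    Y (t *: y1 + (1 - t) *: y2).

Variables (n m p q : nat).
Variables (f : 'rV[R]_n -> 'rV[R]_m -> R) (g : 'rV[R]_n -> 'rV[R]_m -> 'rV[R]_p)
          (G : 'rV[R]_n -> 'rV[R]_q).

Definition Xset : set 'rV[R]_n := [set x | vle_c (G x) 0].

Definition ll_value (x : 'rV[R]_n) : R :=
  inf [set f x y | y in [set y | vle_c (g x y) 0]].

Definition eps_solution (eps : R) (x : 'rV[R]_n) (y : 'rV[R]_m) : Prop :=
  f x y <= ll_value x + eps /\ vle_c (g x y) eps.

Definition h_mu (Y : set 'rV[R]_m) (mu : R) (lam : 'rV[R]_p) (x : 'rV[R]_n) : R :=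
  inf [set mu * sqnorm y + f x y + dotv lam (g x y) | y in Y].

Definition Cset (Y : set 'rV[R]_m) (eps mu : R)
  (x : 'rV[R]_n) (y : 'rV[R]_m) (lam : 'rV[R]_p) : Prop :=
  [/\ vle_c (G x) 0, vle_c (g x y) eps, vge0 lam &
      f x y - h_mu Y mu lam x <= eps].

End Defs.

From HB Require Import structures.
From mathcomp Require Import all_boot all_order all_algebra.
From mathcomp Require Import all_classical all_reals all_analysis.
From mathcomp Require Import ring lra.
Set Implicit Arguments. Unset Strict Implicit. Unset Printing Implicit Defensive.
Import Order.TTheory GRing.Theory Num.Theory.
Import numFieldNormedType.Exports.
Local Open Scope classical_set_scope.
Local Open Scope ring_scope.

(* The lower-level problem at a fixed x is a convex program with a Slater
   point, so Lagrangian duality holds: some multiplier lam >= 0 satisfies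
   v <= f(x,y) + lam^T g(x,y) on Y, where v is the optimal value.  Hence
   v <= h_0(lam,x) <= h_mu(lam,x), which gives every epsilon-solution a point of
   C(eps,mu).  Conversely, since every feasible point lies in Y, weak duality
   h_0(lam,x) <= v holds for all lam >= 0, so a point of C(eps,0) is an
   epsilon-solution.  Duality is proved one constraint at a time: for a single
   constraint the multiplier is the supremum of the slopes (v - F y)/h y over
   the points of Y where h y > 0.  All infima involved are finite because a
   convex function on R^m is bounded above on a box by its values at the
   vertices, hence also bounded below on the box by reflection through its
   centre. *)

Section ConvexRowFunctions.
Variables (R : realType) (m : nat).
Local Notation V := 'rV[R]_m.
Implicit Types (F G : V -> R) (y z : V).

Lemma eq_convex_fun_rV F G : F =1 G -> convex_fun_rV F -> convex_fun_rV G.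
Proof. by move=> eF cF y1 y2 t t0 t1; rewrite -!eF; apply: cF. Qed.

Lemma convex_fun_rV_cst (a : R) : convex_fun_rV (fun _ : V => a).
Proof. by move=> y1 y2 t _ _; nra. Qed.

Lemma convex_fun_rV_add F G : convex_fun_rV F -> convex_fun_rV G ->
  convex_fun_rV (fun y => F y + G y).
Proof.
move=> cF cG y1 y2 t t0 t1.
by have := cF y1 y2 t t0 t1; have := cG y1 y2 t t0 t1; nra.
Qed.

Lemma convex_fun_rV_scale (c : R) F : 0 <= c -> convex_fun_rV F ->
  convex_fun_rV (fun y => c * F y).
Proof.
by move=> c0 cF y1 y2 t t0 t1; have := ler_wpM2l c0 (cF y1 y2 t t0 t1); nra.
Qed.

Lemma convex_fun_rV_sum (I : Type) (r : seq I) (c : I -> R) (Fs : I -> V -> R) :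
  (forall i, 0 <= c i) -> (forall i, convex_fun_rV (Fs i)) ->
  convex_fun_rV (fun y => \sum_(i <- r) c i * Fs i y).
Proof.
move=> c0 cFs; elim: r => [|i r IH].
  by apply: (eq_convex_fun_rV _ (convex_fun_rV_cst 0)) => y; rewrite big_nil.
apply: (eq_convex_fun_rV _ (convex_fun_rV_add (convex_fun_rV_scale (c0 i) (cFs i)) IH)).
by move=> y; rewrite big_cons.
Qed.

Lemma convex_fun_rV_le_max F y1 y2 t : convex_fun_rV F -> 0 <= t <= 1 ->
  F (t *: y1 + (1 - t) *: y2) <= Num.max (F y1) (F y2).
Proof.
move=> cF /andP[t0 t1]; apply: le_trans (cF y1 y2 t t0 t1) _.
have m1 : F y1 <= Num.max (F y1) (F y2) by rewrite le_max lexx.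
have m2 : F y2 <= Num.max (F y1) (F y2) by rewrite le_max lexx orbT.
nra.
Qed.

Definition row_box (M : R) : set V := [set y | forall i, `|y 0 i| <= M].

Definition row_upd y (j : 'I_m) (a : R) : V := \row_i (if i == j then a else y 0 i).

Lemma row_upd_box M y j a : row_box M y -> `|a| <= M -> row_box M (row_upd y j a).
Proof. by move=> yM aM i; rewrite mxE; case: eqP. Qed.

Lemma row_upd_segment M y j : 0 < M -> `|y 0 j| <= M ->
  exists2 t, 0 <= t <= 1 & y = t *: row_upd y j M + (1 - t) *: row_upd y j (- M).
Proof.
move=> M0; rewrite ler_norml => /andP[yj1 yj2].
exists ((y 0 j + M) / (2 * M)).
  by rewrite divr_ge0 ?ler_pdivrMr /=; lra.
apply/rowP => i; rewrite !mxE; case: eqP => [->|_]; last by ring.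
by field; lra.
Qed.

Lemma convex_fun_rV_box_ub F M : convex_fun_rV F -> 0 < M ->
  exists U, forall y, row_box M y -> F y <= U.
Proof.
move=> cF M0.
(* Induction on the number k of leading coordinates that may vary: moving the
   k-th one to +M or -M exhibits y as a convex combination of two points with
   one more coordinate fixed. *)
suff fixed_from k z : exists U, forall y, row_box M y ->
    (forall i : 'I_m, (k <= i)%N -> y 0 i = z 0 i) -> F y <= U.
  have [U HU] := fixed_from m 0; exists U => y yM; apply: HU => // i.
  by rewrite leqNgt ltn_ord.
elim: k z => [|k IH] z.
  exists (F z) => y _ yz; suff -> : y = z by [].
  by apply/rowP => i; apply: yz.
have [km|mk] := ltnP k m; last first.
  have [U HU] := IH z; exists U => y yM yz; apply: HU => // i ki.
  by have := ltn_ord i; rewrite ltnNge (leq_trans mk ki).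
pose j := Ordinal km.
have [U1 HU1] := IH (row_upd z j M); have [U2 HU2] := IH (row_upd z j (- M)).
exists (Num.max U1 U2) => y yM yz.
have agree a (i : 'I_m) : (k <= i)%N -> row_upd y j a 0 i = row_upd z j a 0 i.
  rewrite !mxE; case: eqP => // /eqP nij ki; apply: yz.
  rewrite ltn_neqAle ki andbT eq_sym.
  by apply: contra nij => /eqP e; apply/eqP/val_inj.
have MM : `|M| <= M by rewrite ger0_norm // ltW.
have MN : `|- M| <= M by rewrite normrN.
have [t t01 ->] := row_upd_segment M0 (yM j).
apply: le_trans (convex_fun_rV_le_max _ _ cF t01) _.
by apply: le_max2; [apply: HU1 (agree M) | apply: HU2 (agree (- M))];
  apply: row_upd_box.
Qed.

Lemma convex_fun_rV_box_lb F M : convex_fun_rV F -> 0 < M ->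
  exists c, forall y, row_box M y -> c <= F y.
Proof.
move=> cF M0; have [U HU] := convex_fun_rV_box_ub cF M0.
exists (2 * F 0 - U) => y yM.
have yNM : row_box M (- y) by move=> i; rewrite mxE normrN.
have := HU _ yNM.
have mid : (2^-1 : R) *: y + (1 - 2^-1) *: (- y) = 0.
  by apply/rowP => i; rewrite !mxE; field.
have [half0 half1] : 0 <= 2^-1 :> R /\ 2^-1 <= 1 :> R by split; lra.
have := cF y (- y) _ half0 half1; rewrite mid.
lra.
Qed.

Lemma compact_rV_sub_box (Y : set V) : compact Y -> exists2 M, 0 < M & Y `<=` row_box M.
Proof.
move=> /compact_bounded[M1 [_ HM1]].
exists (`|M1| + 1); first by have := normr_ge0 M1; lra.
move=> y Yy i; apply: le_trans (HM1 (`|M1| + 1) _ _ Yy).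
  by rewrite [leRHS]mx_normrE; apply: (le_bigmax _ _ (0, i)).
by have := ler_norm M1; lra.
Qed.

Lemma convex_fun_rV_compact_lb F (Y : set V) : convex_fun_rV F -> compact Y ->
  exists c, forall y, Y y -> c <= F y.
Proof.
move=> cF /compact_rV_sub_box[M M0 YM].
have [c hc] := convex_fun_rV_box_lb cF M0.
by exists c => y /YM; apply: hc.
Qed.

End ConvexRowFunctions.

Section OneConstraintDuality.
Variables (R : realType) (m : nat).
Local Notation V := 'rV[R]_m.
Variables (Y : set V) (F h : V -> R) (v : R) (y0 : V).
Hypotheses (Y_convex : convex_set_rV Y) (F_convex : convex_fun_rV F).
Hypotheses (h_convex : convex_fun_rV h) (Y_y0 : Y y0) (h_y0 : h y0 < 0).
Hypothesis v_lb : forall y, Y y -> h y <= 0 -> v <= F y.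

(* The chord of h from y1 to y2 vanishes at z = t y1 + (1 - t) y2, so z is
   feasible; v <= F z <= t F y1 + (1 - t) F y2 is the claim after clearing
   denominators. *)
Lemma slater_slope_le y1 y2 : Y y1 -> Y y2 -> 0 < h y1 -> h y2 < 0 ->
  (v - F y1) / h y1 <= (F y2 - v) / (- h y2).
Proof.
move=> Y1 Y2 h1 h2; pose t := - h y2 / (h y1 - h y2).
have t0 : 0 <= t by apply: divr_ge0; lra.
have t1 : t <= 1 by rewrite /t ler_pdivrMr; lra.
have et : t * (h y1 - h y2) = - h y2 by rewrite /t mulfVK // gt_eqF //; lra.
have hz : h (t *: y1 + (1 - t) *: y2) <= 0.
  by have := h_convex y1 y2 t0 t1; nra.
have := le_trans (v_lb (Y_convex Y1 Y2 t0 t1) hz) (F_convex y1 y2 t0 t1).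
have e : (t * F y1 + (1 - t) * F y2) * (h y1 - h y2) = - h y2 * F y1 + h y1 * F y2.
  transitivity (F y1 * (t * (h y1 - h y2)) +
    F y2 * (h y1 - h y2 - t * (h y1 - h y2))); first by ring.
  by rewrite et; ring.
have d0 : 0 <= h y1 - h y2 by lra.
move=> /(ler_wpM2r d0); rewrite e => hF.
by rewrite ler_pdivrMr // mulrAC ler_pdivlMr; lra.
Qed.

Lemma slater_duality1 : exists2 mu, 0 <= mu & forall y, Y y -> v <= F y + mu * h y.
Proof.
pose S := [set s : R | s = 0 \/ exists2 y, Y y /\ 0 < h y & s = (v - F y) / h y].
have S_ub y2 : Y y2 -> h y2 < 0 -> ubound S ((F y2 - v) / (- h y2)).
  move=> Y2 h2 s [->|[y1 [Y1 h1] ->]]; last exact: slater_slope_le.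
  by apply: divr_ge0; have := v_lb Y2 (ltW h2); lra.
have S0 : S 0 by left.
have S_bounded : has_ubound S by exists ((F y0 - v) / (- h y0)); apply: S_ub.
exists (sup S); first exact: ub_le_sup.
move=> y Yy; case: (ltgtP (h y) 0) => [hn|hp|h0].
- have := ge_sup (ex_intro _ 0 S0) (S_ub _ Yy hn).
  by rewrite ler_pdivlMr; nra.
- have : (v - F y) / h y <= sup S by apply: ub_le_sup => //; right; exists y.
  by rewrite ler_pdivrMr //; nra.
- by rewrite h0 mulr0 addr0; apply: v_lb; rewrite // h0.
Qed.

End OneConstraintDuality.

Section FiniteConstraints.
Variables (R : realType) (m : nat).
Local Notation V := 'rV[R]_m.

Lemma slater_duality_nat (H : nat -> V -> R) k (Y : set V) (F : V -> R) v y0 :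
  convex_set_rV Y -> convex_fun_rV F ->
  (forall i, (i < k)%N -> convex_fun_rV (H i)) ->
  Y y0 -> (forall i, (i < k)%N -> H i y0 < 0) ->
  (forall y, Y y -> (forall i, (i < k)%N -> H i y <= 0) -> v <= F y) ->
  exists2 lam : nat -> R, (forall i, 0 <= lam i) &
    forall y, Y y -> v <= F y + \sum_(i < k) lam i * H i y.
Proof.
elim: k Y F => [|k IH] Y F cY cF cH Yy0 Hy0 v_lb.
  exists (fun=> 0) => // y Yy; rewrite big_ord0 addr0.
  by apply: v_lb => // i; rewrite ltn0.
have cHk := cH k (ltnSn k).
pose Yk := [set y | Y y /\ H k y <= 0].
have cYk : convex_set_rV Yk.
  move=> y1 y2 t [Y1 H1] [Y2 H2] t0 t1; split; first exact: cY.
  by have := cHk y1 y2 t t0 t1; nra.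
have [lam lam0 hlam] : exists2 lam : nat -> R, (forall i, 0 <= lam i) &
    forall y, Yk y -> v <= F y + \sum_(i < k) lam i * H i y.
  apply: IH => //.
  - by move=> i ik; apply: cH; rewrite ltnS ltnW.
  - by split => //; apply/ltW/Hy0.
  - by move=> i ik; apply: Hy0; rewrite ltnS ltnW.
  - move=> y [Yy Hky] Hy; apply: v_lb => // i; rewrite ltnS leq_eqVlt.
    by case/orP => [/eqP ->|]; last exact: Hy.
have cL : convex_fun_rV (fun y => F y + \sum_(i < k) lam i * H i y).
  apply: convex_fun_rV_add => //; apply: convex_fun_rV_sum => // i.
  by apply: cH; rewrite ltnS ltnW.
have [mu mu0 hmu] := slater_duality1 cY cL cHk Yy0 (Hy0 k (ltnSn k))
  (fun y Yy Hky => hlam y (conj Yy Hky)).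
exists (fun i => if i == k then mu else lam i) => [i|y Yy]; first by case: eqP.
rewrite big_ord_recr /= eqxx addrA.
under eq_bigr => i _ do rewrite ltn_eqF //.
exact: hmu.
Qed.

Lemma slater_duality p (H : 'I_p -> V -> R) (Y : set V) (F : V -> R) v y0 :
  convex_set_rV Y -> convex_fun_rV F -> (forall k, convex_fun_rV (H k)) ->
  Y y0 -> (forall k, H k y0 < 0) ->
  (forall y, Y y -> (forall k, H k y <= 0) -> v <= F y) ->
  exists2 lam : 'rV[R]_p, vge0 lam &
    forall y, Y y -> v <= F y + \sum_k lam 0 k * H k y.
Proof.
move=> cY cF cH Yy0 Hy0 v_lb.
pose Hn i := oapp H (fun=> 0) (insub i).
have HnE (k : 'I_p) : Hn k = H k by rewrite /Hn valK.
have [lam lam0 hlam] : exists2 lam : nat -> R, (forall i, 0 <= lam i) &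
    forall y, Y y -> v <= F y + \sum_(i < p) lam i * Hn i y.
  apply: (slater_duality_nat (H := Hn) cY cF _ Yy0) => [i ip|i ip|y Yy Hy].
  - by rewrite -[i]/(nat_of_ord (Ordinal ip)) HnE.
  - by rewrite -[i]/(nat_of_ord (Ordinal ip)) HnE.
  - by apply: v_lb => // k; rewrite -HnE; apply: Hy.
exists (\row_k lam k) => [k|y Yy]; first by rewrite mxE.
under eq_bigr => k _ do rewrite mxE -HnE.
exact: hlam.
Qed.

End FiniteConstraints.

Section LowerLevelDuality.
Variables (R : realType) (n m p : nat).
Variables (f : 'rV[R]_n -> 'rV[R]_m -> R) (g : 'rV[R]_n -> 'rV[R]_m -> 'rV[R]_p).
Variables (Y : set 'rV[R]_m) (x : 'rV[R]_n) (y0 : 'rV[R]_m).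
Hypotheses (f_convex : convex_fun_rV (f x))
  (g_convex : forall k, convex_fun_rV (fun y => g x y 0 k)).
Hypotheses (Y_compact : compact Y) (Y_convex : convex_set_rV Y).
Hypothesis feasible_sub_Y : forall y, vle_c (g x y) 0 -> Y y.
Hypothesis slater_point : vlt_c (g x y0) 0.

Let v := ll_value f g x.
Let feasible_y0 : vle_c (g x y0) 0 := fun k => ltW (slater_point k).

Lemma lagrangian_convex lam : vge0 lam ->
  convex_fun_rV (fun y => f x y + dotv lam (g x y)).
Proof. by move=> lam0; apply: convex_fun_rV_add => //; apply: convex_fun_rV_sum. Qed.

Lemma ll_value_le y : vle_c (g x y) 0 -> v <= f x y.
Proof.
move=> gy; apply: ge_inf; last by exists y.
have [c hc] := convex_fun_rV_compact_lb f_convex Y_compact.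
by exists c => _ [y' /feasible_sub_Y Yy' <-]; apply: hc.
Qed.

Lemma lagrange_multiplier_exists : exists2 lam, vge0 lam &
  forall y, Y y -> v <= f x y + dotv lam (g x y).
Proof.
apply: (slater_duality (H := fun k y => g x y 0 k) Y_convex f_convex g_convex
  (feasible_sub_Y feasible_y0) slater_point).
by move=> y _ gy; apply: ll_value_le.
Qed.

Lemma ll_value_le_h_mu mu lam : 0 <= mu ->
  (forall y, Y y -> v <= f x y + dotv lam (g x y)) -> v <= h_mu f g Y mu lam x.
Proof.
move=> mu0 v_lb; apply: lb_le_inf.
  by exists (mu * sqnorm y0 + f x y0 + dotv lam (g x y0)), y0;
    first exact: feasible_sub_Y.
move=> _ [y Yy <-]; have := v_lb y Yy.
have : 0 <= mu * sqnorm y by apply/mulr_ge0/sumr_ge0 => // i _; apply: sqr_ge0.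
lra.
Qed.

Lemma h_mu0_le_ll_value lam : vge0 lam -> h_mu f g Y 0 lam x <= v.
Proof.
move=> lam0; apply: lb_le_inf; first by exists (f x y0), y0.
move=> _ [y gy <-].
have [c hc] := convex_fun_rV_compact_lb (lagrangian_convex lam0) Y_compact.
have L_bounded : has_lbound [set 0 * sqnorm y + f x y + dotv lam (g x y) | y in Y].
  by exists c => _ [z Yz <-]; rewrite mul0r add0r; apply: hc.
apply: le_trans (ge_inf L_bounded (ex_intro2 _ _ y (feasible_sub_Y gy) erefl)) _.
have : dotv lam (g x y) <= 0 by apply: sumr_le0 => k _; apply: mulr_ge0_le0.
rewrite mul0r add0r; lra.
Qed.

End LowerLevelDuality.

Theorem proposition3 (R : realType) (n m p q : nat)
  (f : 'rV[R]_n -> 'rV[R]_m -> R) (g : 'rV[R]_n -> 'rV[R]_m -> 'rV[R]_p)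
  (G : 'rV[R]_n -> 'rV[R]_q) (Y : set 'rV[R]_m)
  (* (A1) *)
  (A1_f_conv : forall x, convex_fun_rV (f x))
  (A1_g_conv : forall x (k : 'I_p), convex_fun_rV (fun y => g x y 0 k))
  (A1_f_C2 : C2 (joint f))
  (A1_g_C2 : forall k : 'I_p, C2 (joint (fun x y => g x y 0 k)))
  (* (A2) *)
  (A2_compact : compact Y) (A2_convex : convex_set_rV Y)
  (A2_int : [set y | exists x, Xset G x /\ vle_c (g x y) 0] `<=` interior Y)
  (* (R1) *)
  (R1 : forall x, Xset G x -> exists y, vlt_c (g x y) 0)
  (eps : R) (heps : 0 <= eps) (x : 'rV[R]_n) (hx : Xset G x) :
  (forall y, eps_solution f g eps x y <-> exists lam, Cset f g G Y eps 0 x y lam) /\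
  (forall mu, 0 <= mu -> forall y, eps_solution f g eps x y ->
     exists lam, Cset f g G Y eps mu x y lam).
Proof.
have feasible_sub_Y y : vle_c (g x y) 0 -> Y y.
  by move=> gy; apply: interior_subset; apply: A2_int; exists x.
have [y0 slater_point] := R1 x hx.
have [lam lam0 dual] := lagrange_multiplier_exists (A1_f_conv x) (A1_g_conv x)
  A2_compact A2_convex feasible_sub_Y slater_point.
have eps_solution_in_C mu : 0 <= mu -> forall y, eps_solution f g eps x y ->
    Cset f g G Y eps mu x y lam.
  move=> mu0 y [fy gy]; split => //.
  by have := ll_value_le_h_mu feasible_sub_Y slater_point mu0 dual; lra.
split=> [y|mu mu0 y /(eps_solution_in_C mu mu0)]; last by exists lam.
split=> [/(eps_solution_in_C 0 (lexx 0))|[lam' [_ gy lam'0 fy]]]; first by exists lam.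
split; last exact: gy.
have := h_mu0_le_ll_value (A1_f_conv x) (A1_g_conv x) A2_compact
  feasible_sub_Y slater_point lam'0.
lra.
Qed.
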